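(* (a) For every $n\ge0$, all roots of $K_n$ are real and lie in $(0,4)$. (b) For every $n\ge3$, all roots of $\mathcal{K}_n$ are real and lie in $[0,4)$; $0$ is a root of multiplicity exactly $\lfloor (n+1)/2\rfloor$, and the remaining $\lfloor n/2\rfloor$ roots are nonzero and simple.
   Context: $K_n(\lambda)$ is defined by $K_0=2$, $K_1=1$, $K_2=\lambda-2$, $K_3=\lambda-3$, $K_{2p+1}=(\lambda-2)K_{2p-1}-K_{2p-3}$, $K_{2p}=(\lambda-2)K_{2p-2}-K_{2p-4}$ ($p\ge2$). $\mathcal{K}_n(\lambda)=\det(\lambda I_n-M_n)$ where $M_n$ is the $n\times n$ matrix with $(M_n)_{j,i}=1$ if $i\ge j-1$ or $(j,i)=(n,n-2)$, and $0$ otherwise. *)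

From HB Require Import structures.
From mathcomp Require Import all_boot all_order all_algebra all_field.
Set Implicit Arguments. Unset Strict Implicit. Unset Printing Implicit Defensive.
Import Order.TTheory GRing.Theory Num.Theory.
Local Open Scope ring_scope.

Fixpoint Kpoly (n : nat) : {poly algC} :=
  match n with
  | 0 => 2%:P
  | 1 => 1
  | 2 => 'X - 2%:P
  | 3 => 'X - 3%:P
  | S (S ((S (S m)) as k)) => ('X - 2%:P) * Kpoly k - Kpoly m
  end.

(* The n x n matrix M_n, 0-indexed: (M_n)_{j,i} = 1 iff (1-indexed)
   i >= j-1, or (j,i) = (n, n-2); i.e. 0-indexed j <= i+1, or
   (j = n-1 and i = n-3). Row index j, column index i. *)
Definition Mmat (n : nat) : 'M[algC]_n :=
  \matrix_(j < n, i < n)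
    (if ((j <= i.+1)%N || ((nat_of_ord j == n.-1)%N && (nat_of_ord i == n - 3)%N)) then 1 else 0).

Definition calK (n : nat) : {poly algC} := char_poly (Mmat n).

(* Substituting lambda = z + 2 + 1/z turns the recurrence of K_n into
   z^(n/2) * w_n(z) * K_n(lambda) = z^n + 1, with w_n(z) = 1 + z for odd n and
   1 for even n.  If w is a primitive 2n-th root of unity, the floor(n/2) odd
   powers w^(2k+1), k < n/2, solve z^n = -1, lie on the unit circle, differ
   from -1, and are pairwise neither equal nor inverse; hence they give
   floor(n/2) distinct roots lambda = |1 + z|^2 in (0,4) of K_n, which is
   monic of degree floor(n/2), so these are all of its roots.  Expanding
   det(lambda I - M_n) along its first column gives
   calK_(n+2) = lambda calK_(n+1) - lambda calK_n for n >= 2, whence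
   calK_n = lambda^ceil(n/2) K_n, and part (b) follows. *)

From HB Require Import structures.
From mathcomp Require Import all_boot all_order all_algebra all_field.
From mathcomp Require Import ring zify.
Set Implicit Arguments.
Unset Strict Implicit.
Import Order.TTheory GRing.Theory Num.Theory.
Local Open Scope ring_scope.

Lemma oner_neqN1 (R : numDomainType) : (1 : R) != -1.
Proof. by rewrite gt_eqF // (lt_trans (ltrN10 _) ltr01). Qed.

Lemma Kpoly_rec m : Kpoly m.+4 = ('X - 2%:P) * Kpoly m.+2 - Kpoly m.
Proof. by []. Qed.

Lemma KpolySS n : Kpoly n.+2 =
  if odd n then Kpoly n.+1 - Kpoly n else 'X * Kpoly n.+1 - Kpoly n.
Proof.
elim/ltn_ind: n => -[|[|m]] IH; first by rewrite /= mulr1.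
  by rewrite /= rmorphD /=; ring.
have IHm := IH m (ltnW (ltnSn _)); have IHm1 := IH m.+1 (ltnSn _).
rewrite Kpoly_rec IHm1 /=; case: (odd m) IHm => /= ->; rewrite ?rmorphD /=; ring.
Qed.

Definition joukowski (z : algC) := 2 + z + z^-1.

Definition Kweight (z : algC) n := if odd n then 1 + z else 1.

Lemma horner_Kpoly_joukowski n z : z != 0 ->
  z ^+ n./2 * Kweight z n * (Kpoly n).[joukowski z] = z ^+ n + 1.
Proof.
move=> z0; elim/ltn_ind: n => -[|[|[|[|m]]]] IH.
1-4: by rewrite /Kweight /joukowski /= !hornerE /= ?exprS ?expr0; field.
have IHm := IH m (leqW (leqW (leqW (ltnSn _)))); have IHm2 := IH m.+2 (leqW (ltnSn _)).
have wS k : Kweight z k.+2 = Kweight z k by rewrite /Kweight /= negbK.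
rewrite wS in IHm2; rewrite wS wS Kpoly_rec !hornerE.
move: IHm IHm2; set w := Kweight z m; set a := (Kpoly m.+2).[_]; set b := (Kpoly m).[_].
rewrite /joukowski /= => IHm IHm2.
have -> : z ^+ (m./2).+2 * w * ((2 + z + z^-1 - 2) * a - b)
   = (z ^+ 2 + 1) * (z ^+ (m./2).+1 * w * a) - z ^+ 2 * (z ^+ m./2 * w * b).
  by rewrite !exprS; field.
by rewrite IHm2 IHm !exprS; ring.
Qed.

Lemma size_Kpoly_monic n :
  size (Kpoly n) = (n./2).+1 /\ ((2 <= n)%N -> Kpoly n \is monic).
Proof.
elim/ltn_ind: n => -[|[|[|[|m]]]] IH.
- by rewrite /= size_polyC pnatr_eq0.
- by rewrite /= size_poly1.
- by rewrite /= size_XsubC monicXsubC.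
- by rewrite /= size_XsubC monicXsubC.
have [sz2 /(_ isT) mon2] := IH m.+2 (leqW (ltnSn _)).
have [sz0 _] := IH m (leqW (leqW (leqW (ltnSn _)))).
have szM : size (('X - 2%:P) * Kpoly m.+2) = (m./2).+3.
  by rewrite size_monicM ?monicXsubC ?monic_neq0 // size_XsubC sz2.
have ltsz : (size (- Kpoly m) < size (('X - 2%:P) * Kpoly m.+2)%R)%N.
  by rewrite size_polyN szM sz0.
rewrite Kpoly_rec size_polyDl //; split => // _.
apply/monicP; rewrite lead_coefDl // lead_coefM.
by rewrite (eqP (monicXsubC _)) (eqP mon2) mulr1.
Qed.

Lemma joukowski_unit_circle z : `|z| = 1 -> z != 1 -> z != -1 ->
  0 < joukowski z < 4.
Proof.
move=> z1 zn1 znm1; have zV : z^-1 = z^* by rewrite invC_norm z1 expr1n invr1 mul1r.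
have zz : z * z^* = 1 by rewrite -normCK z1 expr1n.
have Jsq : joukowski z = (1 + z) * (1 + z)^*.
  by rewrite /joukowski zV rmorphD rmorph1 mulrDr !mulrDl zz; ring.
have J4sq : 4 - joukowski z = (1 - z) * (1 - z)^*.
  by rewrite Jsq rmorphB rmorphD rmorph1 mulrBr !mulrBl !mulrDl !mulrDr zz; ring.
rewrite -[_ < 4]subr_gt0 J4sq Jsq !mul_conjC_gt0 subr_eq0.
by rewrite (eq_sym 1) zn1 addrC addr_eq0 znm1.
Qed.

Lemma joukowski_eq y z : y != 0 -> z != 0 -> joukowski y = joukowski z ->
  (y == z) || (y * z == 1).
Proof.
move=> y0 z0 /eqP; rewrite -subr_eq0 -(mulIr_eq0 _ (mulIf (mulf_neq0 y0 z0))).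
have -> : (joukowski y - joukowski z) * (y * z) = (y - z) * (y * z - 1).
  by rewrite /joukowski; field; rewrite y0 z0.
by rewrite mulf_eq0 !subr_eq0.
Qed.

Lemma root_Kpoly_joukowski n z : z ^+ n = -1 -> z != -1 ->
  root (Kpoly n) (joukowski z).
Proof.
move=> zn znm1; have z0 : z != 0.
  apply: contra_eq_neq zn => ->; rewrite expr0n; case: (n == 0)%N.
    exact: oner_neqN1.
  by rewrite eq_sym oppr_eq0 oner_eq0.
have := horner_Kpoly_joukowski n z0; rewrite zn addNr => /eqP.
rewrite !mulf_eq0 expf_eq0 (negbTE z0) andbF /= => /orP[|//].
by rewrite /Kweight; case: odd; rewrite ?oner_eq0 // addrC addr_eq0 (negbTE znm1).
Qed.

Section OddPowersOfPrimitiveRoot.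

Variables (n : nat) (w : algC).
Hypothesis w_prim : (n.*2).-primitive_root w.

Lemma prim_root_expr_half : w ^+ n = -1.
Proof.
have n0 : (0 < n)%N by rewrite -double_gt0 (prim_order_gt0 w_prim).
have /eqP : (w ^+ n) ^+ 2 = 1 by rewrite -exprM muln2 prim_expr_order.
rewrite sqrf_eq1 => /orP[|/eqP //].
by rewrite -(prim_order_dvd w_prim) => /dvdn_leq; lia.
Qed.

Lemma prim_root_odd_expr_half k : (w ^+ k.*2.+1) ^+ n = -1.
Proof.
by rewrite -exprM mulnC exprM prim_root_expr_half -signr_odd /= odd_double.
Qed.

Lemma norm_prim_root_odd_expr k : `|w ^+ k.*2.+1| = 1.
Proof.
have w1 : `|w| = 1.
  apply/eqP; rewrite -(pexpr_eq1 (prim_order_gt0 w_prim)) // -normrX.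
  by rewrite (prim_expr_order w_prim) normr1.
by rewrite normrX w1 expr1n.
Qed.

Lemma prim_root_odd_expr_neqN1 k : (k < n./2)%N -> w ^+ k.*2.+1 != -1.
Proof.
move=> kn; have := odd_double_half n => nE.
by rewrite -prim_root_expr_half (eq_prim_root_expr w_prim) !modn_small; lia.
Qed.

Lemma joukowski_prim_root_odd_expr_inj :
  {in gtn n./2 &, injective (fun k => joukowski (w ^+ k.*2.+1))}.
Proof.
move=> j k; rewrite !inE => jn kn /joukowski_eq.
have nz i : w ^+ i.*2.+1 != 0 by rewrite -normr_eq0 norm_prim_root_odd_expr oner_eq0.
case/(_ (nz j) (nz k))/orP; have := odd_double_half n.
  by rewrite (eq_prim_root_expr w_prim) !modn_small; lia.
by rewrite -exprD -(prim_order_dvd w_prim) => ? /dvdn_leq; lia.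
Qed.

End OddPowersOfPrimitiveRoot.

Lemma Kpoly_prod_XsubC n : (2 <= n)%N -> exists s : seq algC,
  [/\ uniq s, size s = n./2, Kpoly n = \prod_(x <- s) ('X - x%:P)
    & {in s, forall x, 0 < x < 4}].
Proof.
move=> n2; have [|w w_prim] := @C_prim_root_exists n.*2; first lia.
pose s := [seq joukowski (w ^+ k.*2.+1) | k <- iota 0 n./2].
have s_roots x : x \in s -> root (Kpoly n) x /\ 0 < x < 4.
  case/mapP=> k; rewrite mem_iota add0n => /andP[_ kn] ->.
  have zn := prim_root_odd_expr_half w_prim k.
  have zNm1 := prim_root_odd_expr_neqN1 w_prim kn.
  split; first exact: root_Kpoly_joukowski.
  apply: joukowski_unit_circle (norm_prim_root_odd_expr w_prim k) _ zNm1.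
  by apply: contra_eq_neq zn => ->; rewrite expr1n oner_neqN1.
have s_uniq : uniq s.
  rewrite map_inj_in_uniq ?iota_uniq // => j k; rewrite !mem_iota !add0n.
  move=> /andP[_ jn] /andP[_ kn].
  by apply: (joukowski_prim_root_odd_expr_inj w_prim); rewrite inE.
have [Ksize /(_ n2)/monicP Kmonic] := size_Kpoly_monic n.
exists s; split => //; first by rewrite size_map size_iota.
  rewrite [LHS](@all_roots_prod_XsubC _ _ s) ?Kmonic ?scale1r ?uniq_rootsE //.
    by rewrite Ksize size_map size_iota.
  by apply/allP => x /s_roots[].
by move=> x /s_roots[].
Qed.

Lemma root_Kpoly_bounds n z : root (Kpoly n) z -> z \is Num.real /\ 0 < z /\ z < 4.
Proof.
case: n => [|[|n]].
- by rewrite /= rootC pnatr_eq0.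
- by rewrite /= rootC oner_eq0.
have [s [_ _ -> s_bounds]] := Kpoly_prod_XsubC (isT : (2 <= n.+2)%N).
rewrite root_prod_XsubC => /s_bounds/andP[z0 z4].
by split; [exact: gtr0_real | split].
Qed.

Section NatIndexedMatrix.

Variable R : comPzRingType.

Definition mx_of_fun n (f : nat -> nat -> R) : 'M[R]_n :=
  \matrix_(i < n, j < n) f i j.

Lemma eq_mx_of_fun n (f g : nat -> nat -> R) :
  (forall i j, (i < n)%N -> (j < n)%N -> f i j = g i j) ->
  mx_of_fun n f = mx_of_fun n g.
Proof. by move=> fg; apply/matrixP => i j; rewrite !mxE fg. Qed.

Lemma row'_col'_mx_of_fun n (f : nat -> nat -> R) (i j : 'I_n.+1) :
  row' i (col' j (mx_of_fun n.+1 f)) = mx_of_fun n (fun a b => f (bump i a) (bump j b)).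
Proof. by apply/matrixP => a b; rewrite !mxE. Qed.

Lemma det_mx_of_fun2 (f : nat -> nat -> R) :
  \det (mx_of_fun 2 f) = f 0 0 * f 1 1 - f 1 0 * f 0 1.
Proof.
rewrite (expand_det_col _ 0) !big_ord_recl big_ord0 /cofactor !det_mx11 !mxE /=.
by rewrite addr0 expr0 expr1 !mul1r; ring.
Qed.

Lemma det_mx_of_fun3 (f : nat -> nat -> R) : \det (mx_of_fun 3 f) =
  f 0 0 * (f 1 1 * f 2 2 - f 2 1 * f 1 2)
  - f 1 0 * (f 0 1 * f 2 2 - f 2 1 * f 0 2)
  + f 2 0 * (f 0 1 * f 1 2 - f 1 1 * f 0 2).
Proof.
rewrite (expand_det_col _ 0) !big_ord_recl big_ord0 /cofactor.
by rewrite !row'_col'_mx_of_fun !det_mx_of_fun2 !mxE /= /bump /=; ring.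
Qed.

Lemma expand_det_mx_of_fun_col0 k (f : nat -> nat -> R) :
  (forall i, (2 <= i < k.+2)%N -> f i 0 = 0) ->
  \det (mx_of_fun k.+2 f) = f 0 0 * \det (mx_of_fun k.+1 (fun a b => f a.+1 b.+1))
     - f 1 0 * \det (mx_of_fun k.+1 (fun a b => f (bump 1 a) b.+1)).
Proof.
move=> f_col0; rewrite (expand_det_col _ 0) !big_ord_recl big1 => [|i _]; last first.
  by rewrite mxE f_col0 ?mul0r //= /bump !leq0n; have := ltn_ord i; lia.
by rewrite /cofactor !row'_col'_mx_of_fun !mxE /= addr0 expr0 expr1 !mul1r; ring.
Qed.

Lemma expand_det_mx_of_fun_row0 k (g : nat -> nat -> R) :
  (forall j, (1 <= j < k.+1)%N -> g 0 j = 0) ->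
  \det (mx_of_fun k.+1 g) = g 0 0 * \det (mx_of_fun k (fun a b => g a.+1 b.+1)).
Proof.
move=> g_row0; rewrite (expand_det_row _ 0) big_ord_recl big1 => [|j _]; last first.
  by rewrite mxE g_row0 ?mul0r //= /bump !leq0n; have := ltn_ord j; lia.
by rewrite /cofactor row'_col'_mx_of_fun !mxE /= addr0 expr0 mul1r.
Qed.

Lemma det_mx_of_fun_row0_update k (g h : nat -> nat -> R) :
  (forall i j, (i < k.+1)%N -> (j < k.+1)%N -> (i + j != 0)%N -> g i j = h i j) ->
  \det (mx_of_fun k.+1 g) = \det (mx_of_fun k.+1 h)
     + (g 0 0 - h 0 0) * \det (mx_of_fun k (fun a b => g a.+1 b.+1)).
Proof.
move=> gh.
pose d := mx_of_fun k.+1 (fun i j => if i == 0%N then g 0 j - h 0 j else g i j).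
have det_d : \det d = (g 0 0 - h 0 0) * \det (mx_of_fun k (fun a b => g a.+1 b.+1)).
  rewrite expand_det_mx_of_fun_row0 // => j /andP[j1 jk].
  by rewrite /= gh ?subrr //; lia.
rewrite (@determinant_multilinear _ _ _ (mx_of_fun k.+1 h) d 0 1 1) ?mul1r ?det_d //.
- by apply/rowP => j; rewrite !mxE /=; ring.
- apply/matrixP => a b; rewrite !mxE /= /bump leq0n /= gh //.
  by rewrite add1n ltnS; exact: ltn_ord a.
- by apply/matrixP => a b; rewrite !mxE.
Qed.

End NatIndexedMatrix.

Definition char_Mmat_entry n i j : {poly algC} := (if i == j then 'X else 0) -
  (if ((i <= j.+1) || ((i == n.-1) && (j == n - 3)))%N then 1 else 0)%:P.

Lemma char_Mmat_entry_shift n i j :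
  char_Mmat_entry n.+1 i.+1 j.+1 = char_Mmat_entry n i j.
Proof.
rewrite /char_Mmat_entry /= eqSS; congr (_ - (_)%:P); congr (if _ then _ else _).
rewrite ltnS; have [//|h] := leqP i j.+1.
by rewrite /=; apply/idP/idP => /andP[/eqP h1 /eqP h2]; apply/andP; split; apply/eqP; lia.
Qed.

Lemma calK_det n : calK n = \det (mx_of_fun n (char_Mmat_entry n)).
Proof.
rewrite /calK /char_poly; congr (\det _); apply/matrixP => i j.
rewrite !mxE /char_Mmat_entry; congr (_ - _).
by rewrite -val_eqE; case: (_ == _).
Qed.

Lemma calK_rec k : (2 <= k)%N -> calK k.+2 = 'X * calK k.+1 - 'X * calK k.
Proof.
move=> k2; set e := char_Mmat_entry; rewrite !calK_det.
rewrite (expand_det_mx_of_fun_col0 (k := k)) => [|i /andP[i2 ik]]; last first.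
  rewrite /e /char_Mmat_entry.
  have -> : (i == 0)%N = false by lia.
  have -> : (i <= 1)%N = false by lia.
  have -> : (0 == k.+2 - 3)%N = false by lia.
  by rewrite andbF /= subr0.
have shift1 : mx_of_fun k.+1 (fun a b => e k.+2 a.+1 b.+1) = mx_of_fun k.+1 (e k.+1).
  by apply: eq_mx_of_fun => a b _ _; exact: char_Mmat_entry_shift.
rewrite shift1 (det_mx_of_fun_row0_update
  (g := fun a b => e k.+2 (bump 1 a) b.+1) (h := e k.+1)); last first.
  by move=> [|i] [|j] // _ _ _; rewrite /e /bump /= ?char_Mmat_entry_shift.
rewrite /= (eq_mx_of_fun (n := k) (g := e k)) => [|a b _ _]; last first.
  by rewrite /e /bump add1n !char_Mmat_entry_shift.
rewrite /e /char_Mmat_entry /= polyC1.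
by move: (\det _) (\det _) => x y; ring.
Qed.

Lemma calK_Kpoly n : (2 <= n)%N -> calK n = 'X ^+ (n.+1)./2 * Kpoly n.
Proof.
elim/ltn_ind: n => -[|[|[|[|k]]]] IH // _.
- rewrite calK_det det_mx_of_fun2 /char_Mmat_entry /= !polyC_natr expr1.
  by move: ('X : {poly algC}) => x; ring.
- rewrite calK_det det_mx_of_fun3 /char_Mmat_entry /= !polyC_natr.
  by move: ('X : {poly algC}) => x; ring.
rewrite calK_rec // (IH k.+3) // (IH k.+2) // (KpolySS k.+2).
have -> : odd k.+2 = odd k by rewrite /= negbK.
rewrite (_ : k.+4./2 = (k./2).+2) // (_ : k.+3./2 = (k.+1./2).+1) //.
rewrite (_ : k.+1.+4./2 = (k.+1./2).+2) //.
rewrite (_ : k.+1./2 = (odd k + k./2)%N); last exact: uphalf_half.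
move: (Kpoly k.+3) (Kpoly k.+2) ('X : {poly algC}) => p q x.
by case: (odd k); rewrite ?add0n ?add1n !exprS; ring.
Qed.

Lemma root_Xn_prod_XsubC (F : fieldType) u (s : seq F) z : (0 < u)%N ->
  root ('X^u * \prod_(x <- s) ('X - x%:P)) z = (z == 0) || (z \in s).
Proof. by move=> u_gt0; rewrite rootM root_prod_XsubC rootE hornerXn expf_eq0 u_gt0. Qed.

Lemma mup_Xn_prod_XsubC (F : fieldType) u (s : seq F) z :
  mup z ('X^u * \prod_(x <- s) ('X - x%:P))
  = ((if z == 0%R then u else 0) + count_mem z s)%N.
Proof.
rewrite mupM ?monic_neq0 ?monicXn ?monic_prod_XsubC // mu_prod_XsubC.
have -> : 'X^u = ('X - 0%:P) ^+ u :> {poly F} by rewrite polyC0 subr0.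
by rewrite mup_XsubCX eq_sym.
Qed.

Theorem theorem3 :
  (forall (n : nat) (z : algC), root (Kpoly n) z ->
      z \is Num.real /\ 0 < z /\ z < 4)
  /\
  (forall n : nat, (3 <= n)%N ->
      (forall z : algC, root (calK n) z ->
          z \is Num.real /\ 0 <= z /\ z < 4)
   /\ mup 0 (calK n) = (n.+1)./2
   /\ (exists s : seq algC,
         [/\ uniq s, size s = n./2
           & forall z : algC, (z \in s) = (z != 0) && root (calK n) z])
   /\ (forall z : algC, z != 0 -> root (calK n) z -> mup z (calK n) = 1%N)).
Proof.
split=> [n z|n n3]; first exact: root_Kpoly_bounds.
have [s [s_uniq s_size Ks s_bounds]] := Kpoly_prod_XsubC (ltnW n3).
have calKE : calK n = 'X^((n.+1)./2) * \prod_(x <- s) ('X - x%:P).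
  by rewrite calK_Kpoly ?Ks // ltnW.
have rootE z : root (calK n) z = (z == 0) || (z \in s).
  by rewrite calKE root_Xn_prod_XsubC //; have := odd_double_half n.+1; lia.
have s0 : 0 \notin s by apply/negP => /s_bounds; rewrite ltxx.
split; [|split; [|split]].
- move=> z; rewrite rootE => /orP[/eqP->|/s_bounds/andP[z0 z4]].
    by rewrite real0 lexx ltr0n.
  by rewrite gtr0_real // ltW.
- by rewrite calKE mup_Xn_prod_XsubC eqxx (count_memPn s0) addn0.
- exists s; split => // z; rewrite rootE.
  by case: eqVneq => [->|] //=; apply/negbTE.
- move=> z z0; rewrite rootE calKE mup_Xn_prod_XsubC (negbTE z0) /= => zs.
  by rewrite count_uniq_mem ?zs.
Qed.
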